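(* Let $K\ge 2$, let $\mathcal{D}$ be a probability distribution on $\mathcal{X}\times\mathcal{Y}$ with $\mathcal{Y}=\{1,\dots,K\}$, and let $\rho$ be a probability distribution over classifiers $h:\mathcal{X}\to\mathcal{Y}$. Let $W_\rho(X,Y)=\mathbb{E}_{h\sim\rho}[\mathbb{1}(h(X)\neq Y)]$ for $(X,Y)\sim\mathcal{D}$. Suppose $\rho$ is competent, i.e. for every $0\le t\le 1/2$, $$\mathbb{P}_{\mathcal{D}}\big(W_\rho\in[t,1/2)\big)\;\ge\;\mathbb{P}_{\mathcal{D}}\big(W_\rho\in[1/2,1-t]\big),$$ and suppose $\mathbb{E}_{h\sim\rho}[L(h)]\neq 0$. Then $$\mathrm{DER}\;\ge\;\mathrm{EIR}\;\ge\;\frac{2(K-1)}{K}\,\mathrm{DER}-\frac{3K-4}{K}.$$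
   Context: The error rate of a classifier is $L(h)=\mathbb{E}_{(X,Y)\sim\mathcal{D}}[\mathbb{1}(h(X)\neq Y)]$. The majority vote classifier is $h_{\mathrm{MV}}(x)=\arg\max_j \mathbb{E}_{h\sim\rho}[\mathbb{1}(h(x)=j)]$ (ties broken arbitrarily). The disagreement rate of two classifiers is $D(h,h')=\mathbb{E}_{X\sim\mathcal{D}}[\mathbb{1}(h(X)\neq h'(X))]$, and the expected disagreement is $\mathbb{E}_{h,h'\sim\rho}[D(h,h')]$ with $h,h'$ drawn independently from $\rho$. The ensemble improvement rate is $\mathrm{EIR}=\big(\mathbb{E}_{h\sim\rho}[L(h)]-L(h_{\mathrm{MV}})\big)/\mathbb{E}_{h\sim\rho}[L(h)]$ and the disagreement-error ratio is $\mathrm{DER}=\mathbb{E}_{h,h'\sim\rho}[D(h,h')]/\mathbb{E}_{h\sim\rho}[L(h)]$. *)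

From HB Require Import structures.
From mathcomp Require Import all_boot all_order all_algebra.
From mathcomp Require Import all_classical all_reals all_analysis.
Set Implicit Arguments. Unset Strict Implicit. Unset Printing Implicit Defensive.
Import Order.TTheory GRing.Theory Num.Theory.
Local Open Scope ring_scope.
Local Open Scope classical_set_scope.

(* Setting.
   - labels Y = 'I_K (K classes; 'I_K = {0,..,K-1} stands for {1,..,K});
   - the data (X,Y) ~ D is modelled as a pair of random variables
       Xv : Z -> Xs, Yv : Z -> 'I_K on a probability space (Z, D);
   - classifiers are parameterised: rho is a probability on a measurable
     space Theta and the classifier drawn is  h theta : Xs -> 'I_K. *)
Section ensemble.
Variables (R : realType) (K : nat).
Variables (d1 d2 d3 : measure_display).
Variables (Theta : measurableType d1) (Xs : measurableType d2)
          (Z : measurableType d3).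
Variables (rho : probability Theta R) (D : probability Z R).
Variables (h : Theta -> Xs -> 'I_K) (Xv : Z -> Xs) (Yv : Z -> 'I_K).

Definition Wrho (z : Z) : R :=
  fine (\int[rho]_th ((h th (Xv z) != Yv z)%:R)%:E)%E.

Definition risk (th : Theta) : R :=
  fine (\int[D]_z ((h th (Xv z) != Yv z)%:R)%:E)%E.

Definition gibbs_risk : R := fine (\int[rho]_th (risk th)%:E)%E.

Definition vote (x : Xs) (j : 'I_K) : R :=
  fine (\int[rho]_th ((h th x == j)%:R)%:E)%E.

Definition is_majority_vote (hMV : Xs -> 'I_K) : Prop :=
  forall x j, vote x j <= vote x (hMV x).

Definition risk_fun (g : Xs -> 'I_K) : R :=
  fine (\int[D]_z ((g (Xv z) != Yv z)%:R)%:E)%E.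

Definition disagreement (th th' : Theta) : R :=
  fine (\int[D]_z ((h th (Xv z) != h th' (Xv z))%:R)%:E)%E.

Definition expected_disagreement : R :=
  fine (\int[rho]_th \int[rho]_th' (disagreement th th')%:E)%E.

Definition EIR (hMV : Xs -> 'I_K) : R :=
  (gibbs_risk - risk_fun hMV) / gibbs_risk.

Definition DER : R := expected_disagreement / gibbs_risk.

Definition competent : Prop :=
  forall t : R, 0 <= t -> t <= 1 / 2 ->
    (D [set z | (1 / 2 <= Wrho z <= 1 - t)%R] <=
     D [set z | (t <= Wrho z < 1 / 2)%R])%E.

End ensemble.

From HB Require Import structures.
From mathcomp Require Import all_boot all_order all_algebra.
From mathcomp Require Import all_classical all_reals all_analysis.
From mathcomp Require Import measurable_realfun ring lra.
Import Order.TTheory GRing.Theory Num.Theory.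
Local Open Scope ring_scope.
Local Open Scope classical_set_scope.

(* Let p_j(x) be the rho-mass of the classifiers voting j at x, so that
   W = 1 - p_Y(X). By Fubini, E_rho[L(h)] = E[W] and the expected disagreement
   is E[1 - sum_j p_j(X)^2]. For a
   majority label m, W - 1(m <> Y) <= 1 - sum_j p_j^2, which integrates to
   DER >= EIR. Cauchy-Schwarz over the K - 1 labels other than Y gives
   (K - 1)(1 - sum_j p_j^2) <= 2(K - 1) W - K W^2. Finally the majority vote
   errs only where W >= 1/2, an event of probability at most 2 E[W^2]:
   integrate the competence inequality against d(2t^2) over [0, 1/2].
   Eliminating E[W^2] between the last two bounds gives the lower bound on EIR. *)

Lemma boolR_itv01 {R : numDomainType} (b : bool) : 0 <= (b%:R : R) <= 1.
Proof. by case: b; rewrite /= ?lexx ?ler01. Qed.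

Section boolR.
Context {d} {T : measurableType d} {R : realType}.

Lemma measurable_set_bool (b : T -> bool) :
  measurable_fun setT b -> measurable [set x | b x].
Proof.
(* every subset of bool is measurable, whence the proof [I] *)
move=> mb; have := mb measurableT [set true] I; rewrite setTI.
by congr measurable; apply: eq_set => x /=; case: (b x).
Qed.

Lemma indic_boolE (b : T -> bool) x : \1_[set x | b x] x = (b x)%:R :> R.
Proof.
rewrite indicE; case: (boolP (b x)) => bx; first by rewrite mem_set.
by rewrite memNset //; exact/negP.
Qed.

Lemma measurable_fun_boolR {b : T -> bool} : measurable [set x | b x] ->
  measurable_fun setT (fun x => (b x)%:R : R).
Proof. by move=> mb; rewrite -(funext (indic_boolE b)); exact: measurable_indic. Qed.

End boolR.

Section Rintegral_sum.
Context {d} {T : measurableType d} {R : realType} (mu : {measure set T -> \bar R}).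

Lemma integrable_sumr (I : Type) (s : seq I) (f : I -> T -> R) :
  (forall i, mu.-integrable setT (EFin \o f i)) ->
  mu.-integrable setT (EFin \o fun x => \sum_(i <- s) f i x).
Proof.
move=> fi; apply: eq_integrable measurableT _ _ _
  (integrable_sum measurableT s (fun i _ => fi i)).
by move=> x _; rewrite /= sumEFin.
Qed.

Lemma integrableB_EFin (f g : T -> R) :
  mu.-integrable setT (EFin \o f) -> mu.-integrable setT (EFin \o g) ->
  mu.-integrable setT (EFin \o fun x => f x - g x).
Proof.
move=> fi gi; exact: eq_integrable measurableT _ _ _ (integrableB measurableT fi gi).
Qed.

Lemma integrableZl_EFin (c : R) (f : T -> R) :
  mu.-integrable setT (EFin \o f) -> mu.-integrable setT (EFin \o fun x => c * f x).
Proof.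
move=> fi; apply: eq_integrable measurableT _ _ _ (integrableZl measurableT c fi).
by move=> x _; rewrite /= EFinM.
Qed.

Lemma Rintegral_sum (I : Type) (s : seq I) (f : I -> T -> R) :
  (forall i, mu.-integrable setT (EFin \o f i)) ->
  \int[mu]_x (\sum_(i <- s) f i x) = \sum_(i <- s) \int[mu]_x f i x.
Proof.
move=> fi; elim: s => [|i s IH].
  under eq_Rintegral do rewrite big_nil.
  by rewrite big_nil Rintegral_cst // mul0r.
under eq_Rintegral do rewrite big_cons.
by rewrite RintegralD ?integrable_sumr // IH big_cons.
Qed.

End Rintegral_sum.

Section probability_Rintegral.
Context {d} {T : measurableType d} {R : realType} (P : probability T R).

Lemma bounded_integrable (f : T -> R) (M : R) :
  measurable_fun setT f -> (forall x, `|f x| <= M) -> P.-integrable setT (EFin \o f).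
Proof.
move=> mf fM; apply: measurable_bounded_integrable => //.
  by rewrite (le_lt_trans (probability_le1 P measurableT)) ?ltry.
exists M; split; first exact: num_real.
by move=> y My x _; exact: le_trans (fM x) (ltW My).
Qed.

Lemma unit_interval_integrable (f : T -> R) :
  measurable_fun setT f -> (forall x, 0 <= f x <= 1) ->
  P.-integrable setT (EFin \o f).
Proof.
move=> mf f01; apply: (bounded_integrable _ 1) => // x.
by have /andP[f0 f1] := f01 x; rewrite ger0_norm.
Qed.

Lemma boolR_integrable {b : T -> bool} : measurable [set x | b x] ->
  P.-integrable setT (EFin \o fun x => (b x)%:R).
Proof.
move=> mb; apply: unit_interval_integrable => [|x]; last exact: boolR_itv01.
exact: measurable_fun_boolR.
Qed.

Lemma boolR_diff_integrable {a b : T -> bool} :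
  measurable [set x | a x] -> measurable [set x | b x] ->
  P.-integrable setT (EFin \o fun x => (a x)%:R - (b x)%:R).
Proof.
move=> ma mb; apply: (bounded_integrable _ 1).
  by apply: measurable_funB; exact: measurable_fun_boolR.
move=> x; case: (a x); case: (b x);
  by rewrite /= ?subrr ?subr0 ?sub0r ?normrN ?normr1 ?normr0.
Qed.

Lemma Rintegral_cst_probability (c : R) : \int[P]_x c = c.
Proof.
rewrite Rintegral_cst // -[RHS]mulr1; congr (_ * _).
by rewrite -[1]/(fine 1%E); congr fine; exact: probability_setT.
Qed.

Lemma Rintegral_boolR {b : T -> bool} : measurable [set x | b x] ->
  \int[P]_x (b x)%:R = fine (P [set x | b x]).
Proof.
move=> mb; under eq_Rintegral do rewrite -indic_boolE.
by rewrite /Rintegral integral_indic // setIT.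
Qed.

Lemma Rintegral_unit_interval (f : T -> R) :
  measurable_fun setT f -> (forall x, 0 <= f x <= 1) -> 0 <= \int[P]_x f x <= 1.
Proof.
move=> mf f01; rewrite Rintegral_ge0 => [|x _]; last by case/andP: (f01 x).
rewrite -[X in _ <= X](Rintegral_cst_probability 1) le_Rintegral //.
- exact: unit_interval_integrable.
- exact: finite_measure_integrable_cst.
- by move=> x _; case/andP: (f01 x).
Qed.

Lemma Rintegral_boolR_diff (c : R) {a b : T -> bool} :
  measurable [set x | a x] -> measurable [set x | b x] ->
  \int[P]_x (c * ((a x)%:R - (b x)%:R)) =
  c * (fine (P [set x | a x]) - fine (P [set x | b x])).
Proof.
move=> ma mb; rewrite RintegralZl //; last exact: boolR_diff_integrable.
by rewrite RintegralB ?Rintegral_boolR //; exact: boolR_integrable.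
Qed.

End probability_Rintegral.

Section fubini_unit_interval.
Context {d1 d2} {T1 : measurableType d1} {T2 : measurableType d2} {R : realType}.
Context (P1 : probability T1 R) (P2 : probability T2 R) (f : T1 * T2 -> R).
Hypotheses (mf : measurable_fun setT f) (f01 : forall p, 0 <= f p <= 1).

Let mEf : measurable_fun setT (EFin \o f). Proof. exact/measurable_EFinP. Qed.
Let Ef_ge0 p : (0 <= (EFin \o f) p)%E.
Proof. by rewrite lee_fin; case/andP: (f01 p). Qed.

Lemma measurable_Rfubini_F : measurable_fun setT (fun x => \int[P2]_y f (x, y)).
Proof. exact: measurableT_comp (measurable_fun_fubini_tonelli_F _ mEf Ef_ge0). Qed.

Lemma measurable_Rfubini_G : measurable_fun setT (fun y => \int[P1]_x f (x, y)).
Proof. exact: measurableT_comp (measurable_fun_fubini_tonelli_G _ mEf Ef_ge0). Qed.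

Lemma Rfubini_tonelli :
  \int[P1]_x \int[P2]_y f (x, y) = \int[P2]_y \int[P1]_x f (x, y).
Proof.
rewrite /Rintegral; congr fine.
transitivity (\int[P1]_x \int[P2]_y (EFin \o f) (x, y))%E.
  apply: eq_integral => x _; rewrite fineK // integrable_fin_num //.
  by apply: unit_interval_integrable => [|y]; [exact: measurable_fun_pair2|].
rewrite fubini_tonelli //; apply: eq_integral => y _; rewrite fineK //.
rewrite integrable_fin_num //.
by apply: unit_interval_integrable => [|x]; [exact: measurable_fun_pair1|].
Qed.

End fubini_unit_interval.

Section staircase.
Context {R : realFieldType} (f : R -> R) (t : nat -> R).
Hypotheses (f0 : f 0 = 0) (f_homo : forall {a b}, 0 <= a -> a <= b -> f a <= f b).
Hypotheses (t0 : t 0 = 0) (t_homo : forall k, t k <= t k.+1).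

Definition staircase (m : nat) (w : R) : R :=
  \sum_(k < m) (f (t k.+1) - f (t k)) * (t k.+1 <= w)%R%:R.

Let t_ge0 k : 0 <= t k.
Proof. by elim: k => [|k IH]; [rewrite t0 | exact: le_trans (t_homo k)]. Qed.

Let staircaseS m w : staircase m.+1 w =
  staircase m w + (f (t m.+1) - f (t m)) * (t m.+1 <= w)%R%:R.
Proof. by rewrite /staircase big_ord_recr. Qed.

Lemma staircase_le m w : 0 <= w -> staircase m w <= f w.
Proof.
move=> w0; suff : staircase m w <= if t m <= w then f (t m) else f w.
  by case: ifP => // tw /le_trans; apply; exact: f_homo.
elim: m => [|m IH]; first by rewrite /staircase big_ord0 t0 w0 f0.
rewrite staircaseS; have := f_homo (t_ge0 m) (t_homo m).
case: (leP (t m.+1) w) => [tSw|wtS]; case: (leP (t m) w) => tw /= in IH *.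
- by rewrite mulr1; lra.
- by have := lt_le_trans tw (le_trans (t_homo m) tSw); rewrite ltxx.
- by rewrite mulr0 addr0 => _; exact: le_trans IH (f_homo (t_ge0 m) tw).
- by rewrite mulr0 addr0.
Qed.

Lemma staircase_ge m w e : 0 <= w -> w <= t m -> 0 <= e ->
  (forall k, (k < m)%N -> f (t k.+1) - f (t k) <= e) ->
  f w - e <= staircase m w.
Proof.
move=> w0 wtm e0 step.
suff : (if t m <= w then f (t m) else f w - e) <= staircase m w.
  case: ifP => [tmw|//]; have -> : w = t m by apply/eqP; rewrite eq_le wtm.
  lra.
elim: m step {wtm} => [|m IH] step; first by rewrite /staircase big_ord0 t0 w0 f0.
rewrite staircaseS; have {}IH := IH (fun k km => step k (ltnW km)).
have := step m (ltnSn m).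
case: (leP (t m.+1) w) => [tSw|wtS]; case: (leP (t m) w) => tw /= in IH *.
- by rewrite mulr1; lra.
- by have := lt_le_trans tw (le_trans (t_homo m) tSw); rewrite ltxx.
- by rewrite mulr0 addr0; have := f_homo w0 (ltW wtS); lra.
- by rewrite mulr0 addr0.
Qed.

End staircase.

Section competence_layers.
Context {R : realFieldType} (N : nat).
Hypothesis N_gt0 : (0 < N)%N.

Definition half_grid (k : nat) : R := k%:R / (2 * N%:R).

(* A Riemann sum, on the grid [half_grid], of the integral over t in [0, 1/2] of
   d(2 t^2) (1(t <= w < 1/2) - 1(1/2 <= w <= 1 - t)): its expectation is
   nonnegative by competence, and it undershoots 2 w^2 - 1(1/2 <= w) by at
   most 1/N. *)
Definition competence_layers (w : R) : R :=
  \sum_(k < N) (2 * half_grid k.+1 ^+ 2 - 2 * half_grid k ^+ 2) *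
    ((half_grid k.+1 <= w < 1 / 2)%R%:R - (1 / 2 <= w <= 1 - half_grid k.+1)%R%:R).

Let sq2 (x : R) := 2 * x ^+ 2.
Let sq2_homo a b : 0 <= a -> a <= b -> sq2 a <= sq2 b.
Proof. by rewrite /sq2; nra. Qed.

Let sq2_0 : sq2 0 = 0. Proof. by rewrite /sq2 expr0n mulr0. Qed.

Let N_pos : 0 < N%:R :> R. Proof. by rewrite ltr0n. Qed.

Let half_grid0 : half_grid 0 = 0. Proof. by rewrite /half_grid mul0r. Qed.

Lemma half_grid_ge0 k : 0 <= half_grid k.
Proof. by rewrite divr_ge0. Qed.

Let half_grid_homo k : half_grid k <= half_grid k.+1.
Proof. by rewrite ler_wpM2r ?ler_nat // invr_ge0. Qed.

Lemma competence_layer_weight_ge0 k :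
  0 <= 2 * half_grid k.+1 ^+ 2 - 2 * half_grid k ^+ 2.
Proof. by rewrite subr_ge0; exact: sq2_homo (half_grid_ge0 k) (half_grid_homo k). Qed.

Let half_gridN : half_grid N = 1 / 2.
Proof. by rewrite /half_grid; field; rewrite gt_eqF. Qed.

Lemma half_grid_le_half k : (k <= N)%N -> half_grid k <= 1 / 2.
Proof.
by move=> kN; rewrite -half_gridN ler_pM2r ?ler_nat // invr_gt0 mulr_gt0.
Qed.

Let sq2_step k : (k < N)%N -> sq2 (half_grid k.+1) - sq2 (half_grid k) <= N%:R^-1.
Proof.
move=> kN; have kN' : k%:R + 1 <= N%:R :> R by rewrite natr1 ler_nat.
rewrite /sq2 /half_grid -natr1.
rewrite (_ : _ - _ = (2 * k%:R + 1) / (2 * N%:R ^+ 2)); last by field; rewrite gt_eqF.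
rewrite ler_pdivrMr ?mulr_gt0 ?exprn_gt0 //.
rewrite (_ : N%:R^-1 * _ = 2 * N%:R); last by field; rewrite gt_eqF.
lra.
Qed.

Lemma competence_layers_le w : 0 <= w <= 1 ->
  competence_layers w - N%:R^-1 <= 2 * w ^+ 2 - (1 / 2 <= w)%R%:R.
Proof.
case/andP=> w0 w1; have Ninv0 : 0 <= N%:R^-1 :> R by rewrite invr_ge0 ltW.
have [wlt|wge] := ltP w (1 / 2).
  have -> : competence_layers w = staircase sq2 half_grid N w.
    by apply: eq_bigr => k _; rewrite wlt andbT (lt_geF wlt) subr0.
  have := staircase_le sq2 half_grid sq2_0 sq2_homo half_grid0 half_grid_homo N w w0.
  by rewrite /sq2 /=; lra.
have -> : competence_layers w = - staircase sq2 half_grid N (1 - w).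
  rewrite /staircase -sumrN; apply: eq_bigr => k _.
  by rewrite wge (le_gtF wge) andbF /= sub0r mulrN !lerBrDr [w + _]addrC.
have w'0 : 0 <= 1 - w by lra.
have w'N : 1 - w <= half_grid N by rewrite half_gridN; lra.
have := staircase_ge sq2 half_grid sq2_0 sq2_homo half_grid0 half_grid_homo
  N (1 - w) N%:R^-1 w'0 w'N Ninv0 sq2_step.
rewrite /sq2 /=; have := sqr_ge0 (2 * w - 1); nra.
Qed.

End competence_layers.

Section competence.
Context {d} {Z : measurableType d} {R : realType} (D : probability Z R) (W : Z -> R).
Hypotheses (mW : measurable_fun setT W) (W01 : forall z, 0 <= W z <= 1).
Hypothesis competence : forall t, 0 <= t -> t <= 1 / 2 ->
  (D [set z | (1 / 2 <= W z <= 1 - t)%R] <= D [set z | (t <= W z < 1 / 2)%R])%E.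

Let measurable_lower a : measurable [set z | a <= W z < 1 / 2].
Proof.
apply/measurable_set_bool/measurable_and.
  exact: measurable_fun_ler.
exact: measurable_fun_ltr.
Qed.

Let measurable_upper a : measurable [set z | 1 / 2 <= W z <= a].
Proof.
by apply/measurable_set_bool/measurable_and; exact: measurable_fun_ler.
Qed.

Let layer_integrable (c a : R) : D.-integrable setT
  (EFin \o fun z => c * ((a <= W z < 1 / 2)%R%:R - (1 / 2 <= W z <= 1 - a)%R%:R)).
Proof.
exact/integrableZl_EFin/(boolR_diff_integrable D
  (measurable_lower _) (measurable_upper _)).
Qed.

Let Rintegral_competence_layers_ge0 N : (0 < N)%N ->
  0 <= \int[D]_z competence_layers N (W z).
Proof.
move=> N0; rewrite /competence_layers Rintegral_sum => [|k]; last first.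
  exact: layer_integrable.
apply: sumr_ge0 => k _.
rewrite Rintegral_boolR_diff // mulr_ge0 ?competence_layer_weight_ge0 //.
rewrite subr_ge0 fine_le ?fin_num_measure // competence ?half_grid_ge0 //.
exact: half_grid_le_half.
Qed.

Lemma competent_half_mass_le :
  \int[D]_z (1 / 2 <= W z)%R%:R <= \int[D]_z (2 * W z ^+ 2).
Proof.
have iH : D.-integrable setT (EFin \o fun z => (1 / 2 <= W z)%R%:R).
  exact/boolR_integrable/measurable_set_bool/measurable_fun_ler.
have iW2 : D.-integrable setT (EFin \o fun z => 2 * W z ^+ 2).
  apply: (bounded_integrable D _ 2); first exact/measurable_funM/measurable_funX.
  move=> z; case/andP: (W01 z) => W0 W1.
  by rewrite ger0_norm ?mulr_ge0 ?sqr_ge0 //; nra.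
apply/ler_addgt0Pr => e e0; pose N := (Num.truncn e^-1).+1.
have N0 : (0 < N)%N by [].
have Ne : N%:R^-1 <= e.
  by rewrite -[e]invrK lef_pV2 ?posrE ?invr_gt0 ?ltr0n // ltW // truncnS_gt.
have iL : D.-integrable setT (EFin \o fun z => competence_layers N (W z)).
  by apply: integrable_sumr => k; exact: layer_integrable.
have := Rintegral_competence_layers_ge0 _ N0.
have : \int[D]_z (competence_layers N (W z) - N%:R^-1) <=
       \int[D]_z (2 * W z ^+ 2 - (1 / 2 <= W z)%R%:R).
  apply: le_Rintegral => //; last by move=> z _; exact: competence_layers_le.
  - exact: integrableB_EFin iL (finite_measure_integrable_cst _ _ measurableT).
  - exact: integrableB_EFin.
rewrite !RintegralB ?Rintegral_cst_probability //; last first.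
  exact: finite_measure_integrable_cst.
lra.
Qed.

End competence.

Definition gini {R : realFieldType} {K : nat} (p : 'I_K -> R) : R :=
  1 - \sum_j p j ^+ 2.

Section probability_vector.
Context {R : realFieldType} {K : nat} {p : 'I_K -> R}.

Hypotheses (p_ge0 : forall j, 0 <= p j) (p_sum1 : \sum_j p j = 1).

Let p_le1 j : p j <= 1.
Proof. by rewrite -p_sum1 (bigD1 j) //= lerDl sumr_ge0. Qed.

Lemma gini_ge0 : 0 <= gini p.
Proof.
rewrite subr_ge0 -[X in _ <= X]p_sum1; apply: ler_sum => j _.
by rewrite expr2 ler_piMr.
Qed.

Lemma gini_le1 : gini p <= 1.
Proof. by rewrite gerBl sumr_ge0 // => j _; exact: sqr_ge0. Qed.

Lemma sum_sqr_le_max m : (forall j, p j <= p m) -> \sum_j p j ^+ 2 <= p m.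
Proof.
move=> pm; apply: le_trans (_ : \sum_j p j * p m <= _).
  by apply: ler_sum => j _; rewrite expr2 ler_wpM2l.
by rewrite -mulr_suml p_sum1 mul1r.
Qed.

Lemma error_sub_mv_le_gini y m : (forall j, p j <= p m) ->
  (1 - p y) - (m != y)%:R <= gini p.
Proof.
move=> pm; have := sum_sqr_le_max _ pm; rewrite /gini.
have [->|_] := eqVneq m y; first by rewrite /=; lra.
by have := p_ge0 y; have := p_le1 m; rewrite /=; lra.
Qed.

Lemma half_le_error_of_mv_neq y m : (forall j, p j <= p m) -> m != y ->
  1 / 2 <= 1 - p y.
Proof.
move=> pm my; have : p m + p y <= 1.
  rewrite -p_sum1 (bigD1 m) //= lerD2l (bigD1 y) 1?eq_sym //= lerDl.
  exact: sumr_ge0.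
by have := pm y; lra.
Qed.

(* Cauchy-Schwarz over the K - 1 labels other than y. *)
Lemma gini_le_error y : (1 < K)%N ->
  (K%:R - 1) * gini p <= 2 * (K%:R - 1) * (1 - p y) - K%:R * (1 - p y) ^+ 2.
Proof.
move=> K1; set w := 1 - p y; set S2 := \sum_(j | j != y) p j ^+ 2.
have sum_other : \sum_(j | j != y) p j = w.
  by move: p_sum1; rewrite (bigD1 y) //= /w => <-; rewrite addrAC subrr add0r.
have card_other : \sum_(j | j != y) w ^+ 2 = (K%:R - 1) * w ^+ 2.
  by rewrite sumr_const cardC1 card_ord -[LHS]mulr_natl -subn1 natrB // ltnW.
have K1pos : 0 < K%:R - 1 :> R by rewrite subr_gt0 ltr1n.
have CS : w ^+ 2 <= (K%:R - 1) * S2.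
  have : 0 <= \sum_(j | j != y) ((K%:R - 1) * p j - w) ^+ 2.
    by apply: sumr_ge0 => j _; exact: sqr_ge0.
  have -> : \sum_(j | j != y) ((K%:R - 1) * p j - w) ^+ 2 =
      (K%:R - 1) * ((K%:R - 1) * S2 - w ^+ 2).
    rewrite (eq_bigr (fun j => (K%:R - 1) ^+ 2 * p j ^+ 2 -
      2 * (K%:R - 1) * w * p j + w ^+ 2)) => [|j _]; last by ring.
    by rewrite big_split sumrB /= card_other -!mulr_sumr sum_other -/S2; ring.
  by rewrite pmulr_rge0 // subr_ge0.
have -> : gini p = 1 - (p y ^+ 2 + S2) by rewrite /gini (bigD1 y).
have -> : p y = 1 - w by rewrite /w opprB addrC subrK.
nra.
Qed.

End probability_vector.

Lemma sumr_mul_eq {R : nzRingType} {I : finType} (F : I -> R) (i : I) :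
  \sum_j F j * (i == j)%:R = F i.
Proof.
rewrite (bigD1 i) //= eqxx mulr1 big1 ?addr0 // => j /negbTE.
by rewrite eq_sym => ->; rewrite mulr0.
Qed.

Section measurable_fibers.
Context {K : nat} {d} {U : measurableType d}.

Definition measurable_fibers (c : U -> 'I_K) := forall j, measurable (c @^-1` [set j]).

Lemma measurable_fibers_cst j0 : measurable_fibers (fun _ => j0).
Proof.
move=> j; have [->|ne] := eqVneq j0 j.
  by rewrite (_ : _ @^-1` _ = setT) //; apply/seteqP; split.
rewrite (_ : _ @^-1` _ = set0) //; apply/seteqP; split => // u /= e.
by move: ne; rewrite e eqxx.
Qed.

Lemma measurable_eq_fibers {c1 c2 : U -> 'I_K} :
  measurable_fibers c1 -> measurable_fibers c2 -> measurable [set u | c1 u == c2 u].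
Proof.
move=> m1 m2; have -> : [set u | c1 u == c2 u] =
    \bigcup_(j in setT) (c1 @^-1` [set j] `&` c2 @^-1` [set j]).
  apply/seteqP; split => [u /eqP e|u [j _ [/= -> ->]] //].
  by exists (c1 u) => //; split.
by apply: fin_bigcup_measurable => [|j _]; [exact: finite_finset | exact: measurableI].
Qed.

Lemma measurable_neq_fibers {c1 c2 : U -> 'I_K} :
  measurable_fibers c1 -> measurable_fibers c2 -> measurable [set u | c1 u != c2 u].
Proof.
move=> m1 m2; have -> : [set u | c1 u != c2 u] = ~` [set u | c1 u == c2 u].
  by apply/seteqP; split => u /= /negP.
exact/measurableC/measurable_eq_fibers.
Qed.

End measurable_fibers.

Lemma measurable_fibers_comp {K : nat} {d d'} {U : measurableType d}
    {V : measurableType d'} (c : U -> 'I_K) (g : V -> U) :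
  measurable_fun setT g -> measurable_fibers c -> measurable_fibers (c \o g).
Proof. by move=> mg mc j; rewrite comp_preimage -[_ @^-1` _]setTI; exact: mg. Qed.

Section ensemble.
Context {R : realType} {K : nat} {d1 d2 d3 : measure_display}
  {Theta : measurableType d1} {Xs : measurableType d2} {Z : measurableType d3}
  {rho : probability Theta R} {D : probability Z R}
  {h : Theta -> Xs -> 'I_K} {Xv : Z -> Xs} {Yv : Z -> 'I_K}.
Hypotheses (mh : measurable_fibers (fun p : Theta * Xs => h p.1 p.2))
  (mXv : measurable_fun setT Xv) (mYv : measurable_fibers Yv).

Notation vote := (vote rho h).
Notation W := (Wrho rho h Xv Yv).

Let measurable_fibers_h_at x : measurable_fibers (fun th => h th x).
Proof. exact: measurable_fibers_comp _ (fun th => (th, x)) _ mh. Qed.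

Let measurable_fibers_h_Xv : measurable_fibers (fun p : Theta * Z => h p.1 (Xv p.2)).
Proof.
apply: measurable_fibers_comp _ (fun p : Theta * Z => (p.1, Xv p.2)) _ mh.
exact/measurable_fun_pair/measurableT_comp.
Qed.

Let measurable_fibers_h_Xv_at th :
  measurable_fibers (fun p : Theta * Z => h th (Xv p.2)).
Proof.
apply: measurable_fibers_comp _ (fun p : Theta * Z => (th, Xv p.2)) _ mh.
exact/measurable_fun_pair/measurableT_comp.
Qed.

Let measurable_vote_indicator x j : measurable [set th | h th x == j].
Proof.
exact: measurable_eq_fibers (measurable_fibers_h_at x) (measurable_fibers_cst j).
Qed.

Lemma vote_itv01 x j : 0 <= vote x j <= 1.
Proof.
apply: Rintegral_unit_interval => [|th]; last exact: boolR_itv01.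
exact: measurable_fun_boolR (measurable_vote_indicator x j).
Qed.

Let vote_ge0 x j : 0 <= vote x j. Proof. by case/andP: (vote_itv01 x j). Qed.

Lemma sum_vote x : \sum_j vote x j = 1.
Proof.
rewrite -Rintegral_sum => [|j]; last first.
  exact: boolR_integrable (measurable_vote_indicator x j).
rewrite -[RHS](Rintegral_cst_probability rho); apply: eq_Rintegral => th _.
rewrite (eq_bigr (fun j => 1 * (h th x == j)%:R)) ?sumr_mul_eq // => j _.
by rewrite mul1r.
Qed.

Lemma Rintegral_neq_vote x a : \int[rho]_th (h th x != a)%:R = 1 - vote x a.
Proof.
rewrite -[X in _ = X - _](Rintegral_cst_probability rho 1) -RintegralB //; last 2 first.
- exact: finite_measure_integrable_cst.
- exact: boolR_integrable.
by apply: eq_Rintegral => th _; case: (_ == _); rewrite ?subr0 ?subrr.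
Qed.

Lemma Wrho_vote z : W z = 1 - vote (Xv z) (Yv z).
Proof. exact: Rintegral_neq_vote. Qed.

Let loss (p : Theta * Z) : R := (h p.1 (Xv p.2) != Yv p.2)%:R.

Let measurable_loss : measurable_fun setT loss.
Proof.
exact: measurable_fun_boolR (measurable_neq_fibers measurable_fibers_h_Xv
  (measurable_fibers_comp _ snd measurable_snd mYv)).
Qed.

Let loss_itv01 p : 0 <= loss p <= 1. Proof. exact: boolR_itv01. Qed.

Lemma measurable_Wrho : measurable_fun setT W.
Proof. exact: measurable_Rfubini_G rho loss measurable_loss loss_itv01. Qed.

Lemma gibbs_risk_Wrho : gibbs_risk rho D h Xv Yv = \int[D]_z W z.
Proof. exact: Rfubini_tonelli rho D loss measurable_loss loss_itv01. Qed.

Let measurable_vote_indicator_Xv j :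
  measurable [set p : Theta * Z | h p.1 (Xv p.2) == j].
Proof. exact: measurable_eq_fibers measurable_fibers_h_Xv (measurable_fibers_cst j). Qed.

Lemma measurable_vote_Xv j : measurable_fun setT (fun z => vote (Xv z) j).
Proof.
apply: (measurable_Rfubini_G rho (fun p : Theta * Z => (h p.1 (Xv p.2) == j)%:R)).
  exact: measurable_fun_boolR (measurable_vote_indicator_Xv j).
by move=> p; exact: boolR_itv01.
Qed.

Lemma Rintegral_vote_error x :
  \int[rho]_th (1 - vote x (h th x)) = gini (vote x).
Proof.
under eq_Rintegral do rewrite -sumr_mul_eq.
have term_integrable j :
    rho.-integrable setT (EFin \o fun th => vote x j * (h th x == j)%:R).
  exact/integrableZl_EFin/boolR_integrable.
rewrite RintegralB ?Rintegral_sum ?Rintegral_cst_probability //.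
- congr (_ - _); apply: eq_bigr => j _.
  by rewrite RintegralZl ?expr2 //; exact: boolR_integrable.
- exact: finite_measure_integrable_cst.
- exact: integrable_sumr.
Qed.

Let disagree th (p : Theta * Z) : R := (h th (Xv p.2) != h p.1 (Xv p.2))%:R.

Let measurable_disagree th : measurable_fun setT (disagree th).
Proof.
exact: measurable_fun_boolR
  (measurable_neq_fibers (measurable_fibers_h_Xv_at th) measurable_fibers_h_Xv).
Qed.

Let disagree_itv01 th p : 0 <= disagree th p <= 1. Proof. exact: boolR_itv01. Qed.

Lemma Rintegral_disagreement th :
  \int[rho]_th' disagreement D h Xv th th' =
  \int[D]_z (1 - vote (Xv z) (h th (Xv z))).
Proof.
rewrite (Rfubini_tonelli rho D _ (measurable_disagree th) (disagree_itv01 th)).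
apply: eq_Rintegral => z _; rewrite -Rintegral_neq_vote.
by apply: eq_Rintegral => th' _; rewrite /disagree eq_sym.
Qed.

Let vote_error (p : Theta * Z) : R := 1 - vote (Xv p.2) (h p.1 (Xv p.2)).

Let measurable_vote_error : measurable_fun setT vote_error.
Proof.
rewrite /vote_error; under eq_fun do rewrite -sumr_mul_eq.
apply/measurable_funB/measurable_sum => // j; apply: measurable_funM.
  exact: measurableT_comp (measurable_vote_Xv j) measurable_snd.
exact: measurable_fun_boolR (measurable_vote_indicator_Xv j).
Qed.

Let vote_error_itv01 p : 0 <= vote_error p <= 1.
Proof. by have := vote_itv01 (Xv p.2) (h p.1 (Xv p.2)); rewrite /vote_error; lra. Qed.

Lemma expected_disagreement_gini :
  expected_disagreement rho D h Xv = \int[D]_z gini (vote (Xv z)).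
Proof.
have inner_fin th : (\int[rho]_th' (disagreement D h Xv th th')%:E)%E \is a fin_num.
  apply: integrable_fin_num => //; apply: unit_interval_integrable => [|th'].
    exact: measurable_Rfubini_F D _ (measurable_disagree th) (disagree_itv01 th).
  apply: Rintegral_unit_interval => [|z]; last exact: disagree_itv01 th (th', z).
  exact: measurable_fun_pair2 (measurable_disagree th).
transitivity (\int[rho]_th \int[D]_z vote_error (th, z)).
  rewrite -(eq_Rintegral _ (fun th _ => Rintegral_disagreement th)).
  rewrite /expected_disagreement [RHS]/Rintegral; congr fine.
  by apply: eq_integral => th _; rewrite fineK.
rewrite (Rfubini_tonelli rho D _ measurable_vote_error vote_error_itv01).
by apply: eq_Rintegral => z _; exact: (Rintegral_vote_error (Xv z)).
Qed.

Let W_itv01 z : 0 <= W z <= 1.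
Proof. by rewrite Wrho_vote; have := vote_itv01 (Xv z) (Yv z); lra. Qed.

Let W_integrable : D.-integrable setT (EFin \o W).
Proof. exact: unit_interval_integrable measurable_Wrho W_itv01. Qed.

Let W2_integrable : D.-integrable setT (EFin \o fun z => W z ^+ 2).
Proof.
apply: unit_interval_integrable => [|z]; first exact: measurable_funX measurable_Wrho.
by case/andP: (W_itv01 z) => W0 W1; rewrite exprn_ge0 //=; nra.
Qed.

Let gini_integrable : D.-integrable setT (EFin \o fun z => gini (vote (Xv z))).
Proof.
apply: unit_interval_integrable => [|z].
  apply/measurable_funB/measurable_sum => // j.
  exact: measurable_funX (measurable_vote_Xv j).
by rewrite (gini_ge0 (vote_ge0 _) (sum_vote _)) gini_le1.
Qed.

Lemma gibbs_risk_ge0 : 0 <= gibbs_risk rho D h Xv Yv.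
Proof. by rewrite gibbs_risk_Wrho Rintegral_ge0 // => z _; case/andP: (W_itv01 z). Qed.

Lemma disagreement_le_moments : (1 < K)%N ->
  (K%:R - 1) * expected_disagreement rho D h Xv <=
  2 * (K%:R - 1) * gibbs_risk rho D h Xv Yv - K%:R * \int[D]_z W z ^+ 2.
Proof.
move=> K1; rewrite gibbs_risk_Wrho expected_disagreement_gini -!RintegralZl //.
have iW := integrableZl_EFin D (2 * (K%:R - 1)) _ W_integrable.
have iW2 := integrableZl_EFin D K%:R _ W2_integrable.
rewrite -RintegralB //; apply: le_Rintegral => //.
- exact: integrableZl_EFin.
- exact: integrableB_EFin.
by move=> z _; rewrite Wrho_vote; exact: gini_le_error (sum_vote _) _ K1.
Qed.

Variable (hMV : Xs -> 'I_K).
Hypotheses (mhMV : measurable_fibers hMV) (hMV_vote : is_majority_vote rho h hMV).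

Let measurable_mv_error : measurable [set z | hMV (Xv z) != Yv z].
Proof. exact: measurable_neq_fibers (measurable_fibers_comp _ Xv mXv mhMV) mYv. Qed.

Lemma gibbs_sub_mv_le_disagreement :
  gibbs_risk rho D h Xv Yv - risk_fun D Xv Yv hMV <= expected_disagreement rho D h Xv.
Proof.
rewrite gibbs_risk_Wrho expected_disagreement_gini -RintegralB //; last first.
  exact: boolR_integrable measurable_mv_error.
apply: le_Rintegral => //.
  exact/integrableB_EFin/(boolR_integrable D measurable_mv_error).
move=> z _; rewrite Wrho_vote.
exact: error_sub_mv_le_gini (vote_ge0 _) (sum_vote _) _ _ (hMV_vote (Xv z)).
Qed.

Lemma mv_risk_le_moment : competent rho D h Xv Yv ->
  risk_fun D Xv Yv hMV <= 2 * \int[D]_z W z ^+ 2.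
Proof.
move=> comp; rewrite -RintegralZl //.
apply: le_trans (competent_half_mass_le D W measurable_Wrho W_itv01 comp).
apply: le_Rintegral => //.
- exact: boolR_integrable measurable_mv_error.
- exact/boolR_integrable/measurable_set_bool/measurable_fun_ler/measurable_Wrho.
move=> z _; have [_|mv_err] := eqVneq (hMV (Xv z)) (Yv z); first exact: ler0n.
have := half_le_error_of_mv_neq (vote_ge0 _) (sum_vote _) _ _ (hMV_vote (Xv z)) mv_err.
by rewrite -Wrho_vote => ->.
Qed.

End ensemble.

Lemma eir_bounds_of_moments {R : realFieldType} (k g m dd q : R) :
  0 < k -> 0 < g -> g - m <= dd ->
  (k - 1) * dd <= 2 * (k - 1) * g - k * q -> m <= 2 * q ->
  (g - m) / g <= dd / g /\
  2 * (k - 1) / k * (dd / g) - (3 * k - 4) / k <= (g - m) / g.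
Proof.
move=> k0 g0 gap_le dd_le m_le; split; first by rewrite ler_pM2r ?invr_gt0.
have : 2 * (k - 1) * dd - (3 * k - 4) * g <= k * (g - m).
  by have := ler_wpM2l (ltW k0) m_le; nra.
have -> : 2 * (k - 1) / k * (dd / g) - (3 * k - 4) / k =
    (2 * (k - 1) * dd - (3 * k - 4) * g) / k / g.
  by field; rewrite !gt_eqF.
by move=> key; rewrite ler_pM2r ?invr_gt0 // ler_pdivrMr //; nra.
Qed.

Theorem theorem2 (R : realType) (K : nat) (d1 d2 d3 : measure_display)
    (Theta : measurableType d1) (Xs : measurableType d2) (Z : measurableType d3)
    (rho : probability Theta R) (D : probability Z R)
    (h : Theta -> Xs -> 'I_K) (Xv : Z -> Xs) (Yv : Z -> 'I_K)
    (hMV : Xs -> 'I_K) :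
  (2 <= K)%N ->
  (* measurability (well-definedness) assumptions *)
  (forall j : 'I_K, measurable [set p : Theta * Xs | h p.1 p.2 = j]) ->
  measurable_fun setT Xv ->
  (forall j : 'I_K, measurable (Yv @^-1` [set j])) ->
  (forall j : 'I_K, measurable (hMV @^-1` [set j])) ->
  is_majority_vote rho h hMV ->
  competent rho D h Xv Yv ->
  gibbs_risk rho D h Xv Yv != 0 ->
  DER rho D h Xv Yv >= EIR rho D h Xv Yv hMV /\
  EIR rho D h Xv Yv hMV >=
    (2 * (K%:R - 1)) / K%:R * DER rho D h Xv Yv - (3 * K%:R - 4) / K%:R.
Proof.
move=> K2 mh mXv mYv mhMV hMV_vote comp G0.
have G_gt0 : 0 < gibbs_risk rho D h Xv Yv.
  by rewrite lt_def G0 gibbs_risk_ge0.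
apply: eir_bounds_of_moments G_gt0 _ _ _; first by rewrite ltr0n ltnW.
- exact: gibbs_sub_mv_le_disagreement.
- exact: disagreement_le_moments.
- exact: mv_risk_le_moment.
Qed.
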